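(* Let $R_1,R_2,S_1,S_2$ be positive semidefinite $n\times n$ matrices such that $R_1R_2=R_2R_1$ and $S_1S_2=S_2S_1$. Then for every $k=1,\dots,n$, $$\prod_{i=1}^k\lambda_i\big(R_1^{1/2}R_2^{1/2}\,S_1^{1/2}S_2^{1/2}\big)\le \prod_{i=1}^k\lambda_i^{1/2}(R_1S_1)\,\lambda_i^{1/2}(S_2R_2).$$
   Context: For a matrix $X$ with real nonnegative spectrum, $\lambda_1(X)\ge\lambda_2(X)\ge\dots\ge\lambda_n(X)$ denote its eigenvalues sorted non-increasingly. *)

From HB Require Import structures.
From mathcomp Require Import all_boot all_order all_algebra.
From mathcomp Require Import complex.
From mathcomp Require Import reals.
From Stdlib Require Import ClassicalEpsilon.
Set Implicit Arguments. Unset Strict Implicit. Unset Printing Implicit Defensive.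
Import Order.TTheory GRing.Theory Num.Theory.
Local Open Scope ring_scope.

Definition ctrmx {C : numClosedFieldType} {m n : nat} (A : 'M[C]_(m, n)) : 'M[C]_(n, m) :=
  (map_mx Num.conj A)^T.

Definition psd {C : numClosedFieldType} {n : nat} (A : 'M[C]_n) : Prop :=
  ctrmx A = A /\ forall x : 'cV[C]_n, 0 <= (ctrmx x *m A *m x) 0 0.

(* The positive semidefinite square root A^{1/2}: the (unique) psd B with
   B * B = A; defined by choice (0 if A has no psd square root, which never
   happens for psd A). *)
Definition psd_sqrt {C : numClosedFieldType} {n : nat} (A : 'M[C]_n) : 'M[C]_n :=
  epsilon (inhabits 0) (fun B : 'M[C]_n => psd B /\ B *m B = A).

(* The eigenvalues of A, listed with algebraic multiplicity: the roots of the
   characteristic polynomial. *)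
Definition spectrum {C : numClosedFieldType} {n : nat} (A : 'M[C]_n) : seq C :=
  sval (closed_field_poly_normal (char_poly A)).

(* Eigenvalues sorted non-increasingly (meaningful when the spectrum is real);
   eig A i = lambda_{i+1}(A) (0-based index). *)
Definition eig {C : numClosedFieldType} {n : nat} (A : 'M[C]_n) (i : nat) : C :=
  nth 0 (sort (fun x y : C => y <= x) (spectrum A)) i.

From HB Require Import structures.
From mathcomp Require Import all_boot all_order all_algebra perm.
From mathcomp Require Import complex.
From mathcomp Require Import reals.
From mathcomp Require Import zify.
From Stdlib Require Import ClassicalEpsilon.
Set Implicit Arguments. Unset Strict Implicit. Unset Printing Implicit Defensive.
Import Order.TTheory GRing.Theory Num.Theory.
Local Open Scope ring_scope.

(* Let a, b, c, d be the psd square roots of R1, R2, S1, S2. Commuting psd matrices have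
   commuting square roots and a psd product, so with q = (c d)^(1/2) the product a b c d has the
   spectrum of the psd matrix G = q (a b) q. If the rows of W are the top k eigenvectors of G
   and D = diag(lambda_1(G), ..., lambda_k(G)), then H = W q b satisfies H (a c) (d b) = D H.
   The key estimate is that whenever H has independent rows and H X Y = D H,
     |det D|^2 <= prod_{i<k} lambda_i(X X^* ) * prod_{i<k} lambda_i(Y^* Y):
   after orthonormalizing the rows of H, det D is the determinant of a compression W X Y W^*,
   which factors through an orthonormal basis U of the rows of W Y^*; the determinant of each
   compressed Gram matrix is bounded by Cauchy interlacing. For X = a c and Y = d b the two
   spectra are those of R1 S1 and S2 R2; taking square roots gives the theorem. *)

(* Weinstein-Aronszajn without inverting x: the factor x^n cancels later in {poly F}. *)
Lemma expr_det_scalar_subMC (R : comNzRingType) n (A B : 'M[R]_n) (x : R) :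
  x ^+ n * \det (x%:M - A *m B) = x ^+ n * \det (x%:M - B *m A).
Proof.
pose M := block_mx (x%:M) B A (1%:M : 'M[R]_n).
have e1 : block_mx 1%:M 0 (- A) (x%:M) *m M = block_mx (x%:M) B 0 (x%:M - A *m B).
  rewrite /M mulmx_block !mul1mx !mul0mx !addr0 ?add0r.
  by rewrite mulNmx mul_scalar_mx mul_mx_scalar addNr mulmx1 addrC mulNmx.
have e2 : M *m block_mx 1%:M 0 (- A) (x%:M) = block_mx (x%:M - B *m A) (x *: B) 0 (x%:M).
  rewrite /M mulmx_block !mulmx1 !mulmx0 ?add0r ?addr0 !mul1mx mulmxN addrN.
  by rewrite mul_mx_scalar.
have := congr1 determinant e1; have := congr1 determinant e2.
rewrite !det_mulmx !det_lblock !det_ublock !det1 !det_scalar mul1r => h2 h1.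
by rewrite -h1 mulrC h2 mulrC.
Qed.

Lemma char_poly_mulC (F : fieldType) n (A B : 'M[F]_n) :
  char_poly (A *m B) = char_poly (B *m A).
Proof.
rewrite /char_poly /char_poly_mx !map_mxM.
have := expr_det_scalar_subMC (map_mx polyC A) (map_mx polyC B) 'X.
by apply: mulfI; rewrite expf_neq0 // polyX_eq0.
Qed.

Lemma row_mulmx_sub_nonzero (F : fieldType) m n p q
    (Y : 'M[F]_(p, m)) (A : 'M[F]_(m, n)) (E : 'M[F]_(q, n)) :
  (n < \rank Y + \rank E)%N ->
  exists y : 'rV[F]_m, [/\ y != 0, (y <= Y)%MS & (y *m A <= E)%MS].
Proof.
move=> hrank; pose K := kermx (A *m cokermx E).
have rK : (m - (n - \rank E) <= \rank K)%N.
  rewrite mxrank_ker leq_sub2l // -mxrank_coker; exact: mxrankM_maxr.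
have : (Y :&: K)%MS != 0.
  rewrite -mxrank_eq0; have := mxrank_sum_cap Y K.
  have := rank_leq_col (Y + K)%MS; have := rank_leq_col Y; have := rank_leq_col E.
  by lia.
case/rowV0Pn => y hy nz; exists y; split => //.
  exact: submx_trans hy (capmxSl _ _).
by rewrite submxE -mulmxA; apply/eqP/sub_kermxP; exact: submx_trans hy (capmxSr _ _).
Qed.

Lemma row_pid_mxE (R : pzRingType) m r (c : 'rV[R]_m) i :
  (c *m pid_mx r) 0 i = if (i < r)%N then c 0 i else 0.
Proof.
rewrite !mxE (bigD1 i) //= big1 ?addr0 => [|k ki].
  by rewrite !mxE eqxx /=; case: ifP => _; rewrite ?mulr1 ?mulr0.
by rewrite !mxE (inj_eq val_inj) (negPf ki) mulr0.
Qed.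

Lemma row_copid_mxE (R : pzRingType) m r (c : 'rV[R]_m) i :
  (c *m copid_mx r) 0 i = if (r <= i)%N then c 0 i else 0.
Proof.
rewrite mulmxBr mulmx1; move: (row_pid_mxE r c i); move: (c *m pid_mx r) => M eM.
rewrite !mxE eM ltnNge.
by case: (r <= i)%N; rewrite ?subrr ?subr0.
Qed.

Lemma row_free_intertwine (F : fieldType) k n p (X : 'M[F]_(k, p)) (M : 'M[F]_(p, n))
    (Z : 'M[F]_(k, n)) (D : 'M[F]_k) :
  D \in unitmx -> row_free Z -> X *m M = D *m Z -> row_free X.
Proof.
move=> D_unit Z_free XM; rewrite /row_free eqn_leq rank_leq_row /=.
rewrite -{1}(eqP Z_free) -{1}(mulKmx D_unit Z) -XM.
exact: leq_trans (mxrankM_maxr _ _) (mxrankM_maxl _ _).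
Qed.

Lemma intertwine_commuting (F : fieldType) k n (a b c d q : 'M[F]_n) (W : 'M[F]_(k, n))
    (D : 'M[F]_k) :
  D \in unitmx -> row_free W -> a *m b = b *m a -> q *m q = c *m d ->
  W *m (q *m (a *m b) *m q) = D *m W ->
  row_free (W *m q *m b) /\ W *m q *m b *m (a *m c *m (d *m b)) = D *m (W *m q *m b).
Proof.
move=> D_unit W_free ab qq WG.
have Wq_eig : W *m q *m (a *m b *m (c *m d)) = D *m (W *m q).
  by rewrite -qq !mulmxA -WG !mulmxA.
have Wq_free : row_free (W *m q).
  by apply: (row_free_intertwine (M := a *m b *m q) D_unit W_free); rewrite -WG !mulmxA.
split.
  apply: (row_free_intertwine (M := a *m c *m d) D_unit Wq_free).
  by rewrite -Wq_eig -!mulmxA (mulmxA b a) -ab -!mulmxA.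
by rewrite [RHS]mulmxA -Wq_eig -!mulmxA (mulmxA b a) -ab -!mulmxA.
Qed.

Section PsdMatrices.
Variable C : numClosedFieldType.

Lemma ctrmxE m n (A : 'M[C]_(m, n)) : ctrmx A = (A ^t*)%sesqui.
Proof. by rewrite /ctrmx map_trmx. Qed.

Lemma ctrmxK m n (A : 'M[C]_(m, n)) : ctrmx (ctrmx A) = A.
Proof. by apply/matrixP=> i j; rewrite !mxE conjCK. Qed.

Lemma ctrmxM m n p (A : 'M[C]_(m, n)) (B : 'M[C]_(n, p)) :
  ctrmx (A *m B) = ctrmx B *m ctrmx A.
Proof. by rewrite /ctrmx map_mxM trmx_mul. Qed.

Lemma ctrmx1 n : ctrmx (1%:M : 'M[C]_n) = 1%:M.
Proof. by rewrite /ctrmx map_mx1 trmx1. Qed.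

Lemma ctrmxB m n (A B : 'M[C]_(m, n)) : ctrmx (A - B) = ctrmx A - ctrmx B.
Proof. by rewrite /ctrmx map_mxB linearB. Qed.

Lemma ctrmx_diag n (d : 'rV[C]_n) : ctrmx (diag_mx d) = diag_mx (map_mx Num.conj d).
Proof.
by apply/matrixP=> i j; rewrite !mxE; case: eqVneq => [->|]; rewrite ?conjC0 ?mulr1n ?mulr0n.
Qed.

Lemma det_ctrmx n (A : 'M[C]_n) : \det (ctrmx A) = (\det A)^*.
Proof. by rewrite /ctrmx det_tr det_map_mx. Qed.

Lemma spectrum_mulC n (A B : 'M[C]_n) : spectrum (A *m B) = spectrum (B *m A).
Proof. by rewrite /spectrum char_poly_mulC. Qed.

Lemma eig_mulC n (A B : 'M[C]_n) : eig (A *m B) = eig (B *m A).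
Proof. by rewrite /eig spectrum_mulC. Qed.

Lemma mul_ctrmx_entry m n p (A : 'M[C]_(m, n)) (B : 'M[C]_(p, n)) i j :
  (A *m ctrmx B) i j = \sum_k A i k * (B j k)^*.
Proof. by rewrite !mxE; apply: eq_bigr => k _; rewrite !mxE. Qed.

Lemma ctrmx_diag_mul_entry m n (P : 'M[C]_(m, n)) (d : 'rV[C]_m) x y :
  (ctrmx P *m diag_mx d *m P) x y = \sum_i (P i x)^* * d 0 i * P i y.
Proof. by rewrite !mxE; apply: eq_bigr => i _; rewrite mul_mx_diag !mxE. Qed.

Lemma quad_diag n (z d : 'rV[C]_n) :
  (z *m diag_mx d *m ctrmx z) 0 0 = \sum_j d 0 j * (z 0 j * (z 0 j)^*).
Proof.
rewrite mul_mx_diag !mxE; apply: eq_bigr => j _; rewrite !mxE.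
by rewrite mulrAC mulrC.
Qed.

Lemma quad_congr m n (y : 'rV[C]_n) (P : 'M[C]_(m, n)) (H : 'M[C]_m) :
  y *m (ctrmx P *m H *m P) *m ctrmx y = (y *m ctrmx P) *m H *m ctrmx (y *m ctrmx P).
Proof. by rewrite ctrmxM ctrmxK !mulmxA. Qed.

Lemma unitary_norm m n (Q : 'M[C]_(m, n)) (z : 'rV[C]_m) : Q *m ctrmx Q = 1%:M ->
  (z *m Q) *m ctrmx (z *m Q) = z *m ctrmx z.
Proof. by move=> hQ; rewrite ctrmxM mulmxA -[z *m Q *m ctrmx Q]mulmxA hQ mulmx1. Qed.

Lemma sqr_norm_ge0 m (y : 'rV[C]_m) : 0 <= (y *m ctrmx y) 0 0.
Proof. by rewrite mul_ctrmx_entry; apply: sumr_ge0 => k _; exact: mul_conjC_ge0. Qed.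

Lemma sqr_norm_gt0 m (y : 'rV[C]_m) : y != 0 -> 0 < (y *m ctrmx y) 0 0.
Proof. by rewrite ctrmxE -dotmxE; exact: dotmx_is_dotmx. Qed.

Lemma psd_herm n (A : 'M[C]_n) : psd A -> ctrmx A = A.
Proof. by case. Qed.

Lemma psd_quad_ge0 n (A : 'M[C]_n) (y : 'rV[C]_n) : psd A -> 0 <= (y *m A *m ctrmx y) 0 0.
Proof. by case=> _ hA; have := hA (ctrmx y); rewrite ctrmxK. Qed.

Lemma psdP n (A : 'M[C]_n) : ctrmx A = A ->
  (forall y : 'rV[C]_n, 0 <= (y *m A *m ctrmx y) 0 0) -> psd A.
Proof. by move=> hA hq; split => // x; have := hq (ctrmx x); rewrite ctrmxK. Qed.

Lemma psd_congr m n (H : 'M[C]_n) (A : 'M[C]_(m, n)) : psd H -> psd (A *m H *m ctrmx A).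
Proof.
move=> hH; apply: psdP => [|y]; first by rewrite !ctrmxM ctrmxK (psd_herm hH) mulmxA.
by have := psd_quad_ge0 (y *m A) hH; rewrite ctrmxM !mulmxA.
Qed.

Lemma psd_gram m n (A : 'M[C]_(m, n)) : psd (A *m ctrmx A).
Proof.
have psd1 : psd (1%:M : 'M[C]_n).
  by apply: psdP => [|y]; rewrite ?ctrmx1 // mulmx1 sqr_norm_ge0.
by have := psd_congr A psd1; rewrite mulmx1.
Qed.

Lemma hermitian_unitary_diag n (A : 'M[C]_n) : ctrmx A = A ->
  exists (P : 'M[C]_n) (d : 'rV[C]_n), P *m ctrmx P = 1%:M /\ A = ctrmx P *m diag_mx d *m P.
Proof.
move=> hA; have /orthomx_spectralP eA : A \is normalmx.
  by apply/hermitian_normalmx/is_hermitianmxP; rewrite expr0 scale1r -ctrmxE hA.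
have U := spectral_unitarymx A.
exists (spectralmx A), (spectral_diag A); rewrite !ctrmxE; split.
  exact/unitarymxP.
by rewrite {1}eA invmx_unitary.
Qed.

Lemma psd_unitary_diag_ge0 n (P : 'M[C]_n) (d : 'rV[C]_n) i : P *m ctrmx P = 1%:M ->
  psd (ctrmx P *m diag_mx d *m P) -> 0 <= d 0 i.
Proof.
move=> hP /(psd_quad_ge0 (row i P)); rewrite quad_congr -row_mul hP row1 quad_diag.
rewrite (bigD1 i) //= big1 => [|j ji]; last by rewrite !mxE (negPf ji) mul0r mulr0.
by rewrite !mxE !eqxx /= conjC1 !mulr1 addr0.
Qed.

Lemma unitary_row_perm n (P : 'M[C]_n) (p : 'S_n) : P *m ctrmx P = 1%:M ->
  row_perm p P *m ctrmx (row_perm p P) = 1%:M.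
Proof.
move=> /matrixP hP; apply/matrixP => i j; rewrite mul_ctrmx_entry.
have := hP (p i) (p j); rewrite mul_ctrmx_entry !mxE (inj_eq perm_inj) => <-.
by apply: eq_bigr => k _; rewrite !mxE.
Qed.

Lemma conj_diag_row_perm n (P : 'M[C]_n) (d : 'rV[C]_n) (p : 'S_n) :
  ctrmx (row_perm p P) *m diag_mx (\row_i d 0 (p i)) *m row_perm p P
  = ctrmx P *m diag_mx d *m P.
Proof.
apply/matrixP => x y; rewrite !ctrmx_diag_mul_entry [RHS](reindex_inj (@perm_inj _ p)) /=.
by apply: eq_bigr => i _; rewrite !mxE.
Qed.

Lemma spectrum_diag n (d : 'rV[C]_n) :
  perm_eq (spectrum (diag_mx d)) [seq d 0 i | i <- enum 'I_n].
Proof.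
apply: prod_XsubC_eq.
have := svalP (closed_field_poly_normal (char_poly (diag_mx d))).
rewrite -/(spectrum _) (monicP (char_poly_monic _)) scale1r => <-.
rewrite char_poly_trig ?diag_mx_is_trig // big_map big_enum /=.
by apply: eq_bigr => i _; rewrite mxE eqxx mulr1n.
Qed.

Local Notation ge_sort := (sort (fun x y : C => y <= x)).

Lemma eig_unitary_diag n (P : 'M[C]_n) (d : 'rV[C]_n) : P *m ctrmx P = 1%:M ->
  (forall i, d 0 i \is Num.real) ->
  eig (ctrmx P *m diag_mx d *m P) = nth 0 (ge_sort [seq d 0 i | i <- enum 'I_n]).
Proof.
move=> hP dreal; rewrite /eig -mulmxA spectrum_mulC -mulmxA hP mulmx1.
have /allP sreal : all (fun x => x \is Num.real) [seq d 0 i | i <- enum 'I_n].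
  by apply/allP => _ /mapP [i _ ->].
congr nth; apply/perm_sort_inP; last exact: spectrum_diag.
- move=> x y /[!(perm_mem (spectrum_diag d))] /sreal xr /sreal yr.
  by rewrite orbC real_leVge.
- by move=> x y z _ _ _ /= yx zy; exact: le_trans zy yx.
- by move=> x y _ _ /= yx; apply/le_anti; rewrite andbC.
Qed.

Lemma psd_spectral n (A : 'M[C]_n) : psd A ->
  exists (P : 'M[C]_n) (d : 'rV[C]_n),
   [/\ P *m ctrmx P = 1%:M, A = ctrmx P *m diag_mx d *m P,
    forall i, 0 <= d 0 i, forall i j : 'I_n, (i <= j)%N -> d 0 j <= d 0 i
    & forall i : 'I_n, eig A i = d 0 i].
Proof.
move=> hA; have [P0 [d0 [hP0 eA]]] := hermitian_unitary_diag (psd_herm hA).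
have d0_ge0 i : 0 <= d0 0 i by apply: psd_unitary_diag_ge0 hP0 _; rewrite -eA.
have d0_real i : d0 0 i \is Num.real by rewrite ger0_real.
pose s := ge_sort [seq d0 0 i | i <- enum 'I_n].
have /tuple_permP [p sp] : perm_eq s [tuple d0 0 i | i < n] by rewrite perm_sort.
pose d := \row_i d0 0 (p i).
have sd (i : 'I_n) : nth 0 s i = d 0 i by rewrite sp nth_mktuple tnth_mktuple mxE.
exists (row_perm p P0), d; split.
- exact: unitary_row_perm.
- by rewrite conj_diag_row_perm.
- by move=> i; rewrite mxE.
- move=> i j ij; rewrite -!sd.
  have s_sorted : sorted (fun x y : C => y <= x) s.
    apply: (sort_sorted_in (P := Num.real)) => [x y xr yr|]; first by rewrite orbC real_leVge.
    by apply/allP => _ /mapP [k _ ->]; exact: d0_real.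
  have ge_trans : transitive (fun x y : C => y <= x) by move=> x y z yx zy; exact: le_trans zy yx.
  apply: (sorted_leq_nth ge_trans (fun x => lexx x) 0 s_sorted) => //;
    by rewrite inE size_sort size_map size_enum_ord.
- by move=> i; rewrite eA eig_unitary_diag.
Qed.

Lemma psd_sqrtP n (A : 'M[C]_n) : psd A ->
  psd (psd_sqrt A) /\ psd_sqrt A *m psd_sqrt A = A.
Proof.
move=> hA; apply: (epsilon_spec (inhabits 0) (fun B : 'M[C]_n => psd B /\ B *m B = A)).
have [P [d [hP eA d_ge0 _ _]]] := psd_spectral hA.
pose s : 'rV[C]_n := \row_j sqrtC (d 0 j).
exists (ctrmx P *m diag_mx s *m P); split.
  apply: psdP => [|y].
    rewrite !ctrmxM ctrmxK ctrmx_diag mulmxA; congr (_ *m _ *m _).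
    by apply/matrixP => i j; rewrite !mxE geC0_conj // sqrtC_ge0.
  rewrite quad_congr quad_diag; apply: sumr_ge0 => j _.
  by rewrite mulr_ge0 ?mul_conjC_ge0 // mxE sqrtC_ge0.
rewrite eA -!mulmxA; congr (_ *m _); rewrite !mulmxA -[_ *m P *m ctrmx P]mulmxA hP mulmx1.
rewrite mulmx_diag; congr (diag_mx _ *m _).
by apply/matrixP => i j; rewrite !mxE ord1 -expr2 sqrtCK.
Qed.

Lemma commute_diag_of_sqr n (X : 'M[C]_n) (d : 'rV[C]_n) : (forall i, 0 <= d 0 i) ->
  X *m (diag_mx d *m diag_mx d) = (diag_mx d *m diag_mx d) *m X ->
  X *m diag_mx d = diag_mx d *m X.
Proof.
move=> d_ge0 /matrixP XD; apply/matrixP => i j; move: (XD i j).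
rewrite mulmx_diag !mul_mx_diag !mul_diag_mx !mxE => e.
have [->|nz] := eqVneq (X i j) 0; first by rewrite mul0r mulr0.
have : d 0 j ^+ 2 = d 0 i ^+ 2 by apply: (mulfI nz); rewrite !expr2 e mulrC.
by move/eqP; rewrite eqrXn2 // => /eqP ->; rewrite mulrC.
Qed.

(* In an eigenbasis of a, B preserves the eigenspaces of a^2, which are those of a as a >= 0. *)
Lemma psd_commute_of_sqr n (a B : 'M[C]_n) : psd a ->
  B *m (a *m a) = (a *m a) *m B -> B *m a = a *m B.
Proof.
move=> ha; have [P [d [hP ea d_ge0 _ _]]] := psd_spectral ha.
have hPP : ctrmx P *m P = 1%:M by exact: mulmx1C.
pose X := P *m B *m ctrmx P.
have eB : B = ctrmx P *m X *m P by rewrite /X !mulmxA hPP mul1mx -mulmxA hPP mulmx1.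
have conj_mul (Y Z : 'M[C]_n) :
    (ctrmx P *m Y *m P) *m (ctrmx P *m Z *m P) = ctrmx P *m (Y *m Z) *m P.
  by rewrite !mulmxA -[ctrmx P *m Y *m P *m ctrmx P]mulmxA hP mulmx1.
have conj_inj (Y Z : 'M[C]_n) : ctrmx P *m Y *m P = ctrmx P *m Z *m P -> Y = Z.
  move/(congr1 (fun M => P *m M *m ctrmx P)); rewrite /= !mulmxA hP !mul1mx.
  by rewrite -!mulmxA hP !mulmx1.
by rewrite ea eB !conj_mul => /conj_inj /(commute_diag_of_sqr d_ge0) ->.
Qed.

Lemma psd_mulmx_comm n (c d : 'M[C]_n) : psd c -> psd d -> c *m d = d *m c -> psd (c *m d).
Proof.
move=> hc hd cd; have [hs ss] := psd_sqrtP hc; set s := psd_sqrt c in hs ss.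
have ds : d *m s = s *m d by apply: psd_commute_of_sqr; rewrite // ss.
apply: psdP => [|y]; first by rewrite ctrmxM (psd_herm hc) (psd_herm hd).
have := psd_quad_ge0 (y *m s) hd.
by rewrite ctrmxM (psd_herm hs) -ss !mulmxA -[y *m s *m d *m s]mulmxA ds !mulmxA.
Qed.

Lemma psd_sqrt_comm n (A B : 'M[C]_n) : psd A -> psd B -> A *m B = B *m A ->
  psd_sqrt A *m psd_sqrt B = psd_sqrt B *m psd_sqrt A.
Proof.
move=> hA hB AB; have [ha aa] := psd_sqrtP hA; have [hb bb] := psd_sqrtP hB.
have Ba : B *m psd_sqrt A = psd_sqrt A *m B by apply: psd_commute_of_sqr; rewrite // aa.
by apply: psd_commute_of_sqr; rewrite // bb.
Qed.

Definition contraction m n (A : 'M[C]_(m, n)) :=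
  forall y : 'rV[C]_m, (y *m A *m ctrmx (y *m A)) 0 0 <= (y *m ctrmx y) 0 0.

Lemma lead_eigenspace_quad_ge m (Q : 'M[C]_m) (g : 'rV[C]_m) (j : 'I_m) (y : 'rV[C]_m) :
  Q *m ctrmx Q = 1%:M -> (forall i k : 'I_m, (i <= k)%N -> g 0 k <= g 0 i) ->
  (y <= (pid_mx j.+1 : 'M_m) *m Q)%MS ->
  g 0 j * (y *m ctrmx y) 0 0 <= (y *m (ctrmx Q *m diag_mx g *m Q) *m ctrmx y) 0 0.
Proof.
move=> hQ g_sorted /submxP [c ->]; rewrite !(mulmxA c); set z := c *m _.
rewrite quad_congr -(mulmxA z Q (ctrmx Q)) hQ mulmx1 unitary_norm //.
rewrite quad_diag mul_ctrmx_entry mulr_sumr; apply: ler_sum => i _.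
rewrite row_pid_mxE; case: ifP => [ij|_]; last by rewrite mul0r !mulr0.
by apply: ler_wpM2r; [exact: mul_conjC_ge0 | apply: g_sorted; rewrite -ltnS].
Qed.

Lemma tail_eigenspace_quad_le n (P : 'M[C]_n) (h : 'rV[C]_n) (j : 'I_n) (w : 'rV[C]_n) :
  P *m ctrmx P = 1%:M -> (forall i k : 'I_n, (i <= k)%N -> h 0 k <= h 0 i) ->
  (w <= (copid_mx j : 'M_n) *m P)%MS ->
  (w *m (ctrmx P *m diag_mx h *m P) *m ctrmx w) 0 0 <= h 0 j * (w *m ctrmx w) 0 0.
Proof.
move=> hP h_sorted /submxP [c ->]; rewrite !(mulmxA c); set z := c *m _.
rewrite quad_congr -(mulmxA z P (ctrmx P)) hP mulmx1 unitary_norm //.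
rewrite quad_diag mul_ctrmx_entry mulr_sumr; apply: ler_sum => i _.
rewrite row_copid_mxE; case: ifP => [ji|_]; last by rewrite mul0r !mulr0.
by apply: ler_wpM2r; [exact: mul_conjC_ge0 | exact: h_sorted].
Qed.

(* Cauchy interlacing via Courant-Fischer: a nonzero y in the span of the top j+1 eigenvectors of
   A H A^* with y A in the span of the bottom n-j eigenvectors of H. *)
Lemma eig_contraction_le m n (H : 'M[C]_n) (A : 'M[C]_(m, n)) (j : nat) :
  psd H -> contraction A -> (j < m)%N -> (j < n)%N ->
  eig (A *m H *m ctrmx A) j <= eig H j.
Proof.
move=> hH hA jm jn.
have [P [h [hP eH h_ge0 h_sorted eigH]]] := psd_spectral hH.
have [Q [g [hQ eG _ g_sorted eigG]]] := psd_spectral (psd_congr A hH).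
rewrite (eigH (Ordinal jn)) (eigG (Ordinal jm)) /=.
have rank_lead : \rank (pid_mx j.+1 *m Q : 'M_m) = j.+1.
  by rewrite mxrankMfree ?rank_pid_mx // row_free_unit; case: (mulmx1_unit hQ).
have rank_tail : \rank (copid_mx j *m P : 'M_n) = (n - j)%N.
  by rewrite mxrankMfree ?rank_copid_mx ?(ltnW jn) // row_free_unit; case: (mulmx1_unit hP).
have [y [y_neq0 y_lead yA_tail]] : exists y : 'rV[C]_m, [/\ y != 0,
    (y <= (pid_mx j.+1 : 'M_m) *m Q)%MS & (y *m A <= (copid_mx j : 'M_n) *m P)%MS].
  by apply: row_mulmx_sub_nonzero; rewrite rank_lead rank_tail; lia.
rewrite -(ler_pM2r (sqr_norm_gt0 y_neq0)).
apply: le_trans (lead_eigenspace_quad_ge (j := Ordinal jm) hQ g_sorted y_lead) _.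
rewrite -eG (_ : y *m (A *m H *m ctrmx A) *m ctrmx y
    = (y *m A) *m H *m ctrmx (y *m A)); last first.
  by rewrite ctrmxM !mulmxA.
rewrite eH; apply: le_trans (tail_eigenspace_quad_le (j := Ordinal jn) hP h_sorted yA_tail) _.
by apply: ler_wpM2l; [exact: h_ge0 | exact: hA].
Qed.

Lemma eig_psd_ge0 n (A : 'M[C]_n) i : psd A -> (i < n)%N -> 0 <= eig A i.
Proof.
by move=> hA ni; have [P [d [_ _ d_ge0 _ eigA]]] := psd_spectral hA; rewrite (eigA (Ordinal ni)).
Qed.

Lemma det_psd n (A : 'M[C]_n) : psd A -> \det A = \prod_(i < n) eig A i.
Proof.
move=> hA; have [P [d [hP eA _ _ eigA]]] := psd_spectral hA.
rewrite {1}eA !det_mulmx det_diag mulrAC -det_mulmx mulmx1C // det1 mul1r.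
by apply: eq_bigr => i _; rewrite eigA.
Qed.

Lemma det_contraction_le k n (H : 'M[C]_n) (A : 'M[C]_(k, n)) :
  psd H -> contraction A -> (k <= n)%N -> \det (A *m H *m ctrmx A) <= \prod_(i < k) eig H i.
Proof.
move=> hH hA kn; have hG := psd_congr A hH.
have kn_ord (i : 'I_k) : (i < n)%N by exact: leq_trans (ltn_ord i) kn.
rewrite det_psd //; apply: ler_prod => i _; rewrite eig_psd_ge0 //=.
exact: eig_contraction_le.
Qed.

Lemma unitary_contraction k n (W : 'M[C]_(k, n)) : W *m ctrmx W = 1%:M -> contraction W.
Proof. by move=> hW y; rewrite unitary_norm. Qed.

Lemma proj_contraction k n (U : 'M[C]_(k, n)) : U *m ctrmx U = 1%:M ->
  contraction (ctrmx U *m U).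
Proof.
move=> hU y; set Pi := ctrmx U *m U.
have Pi_herm : ctrmx Pi = Pi by rewrite /Pi ctrmxM ctrmxK.
have Pi_idem : Pi *m Pi = Pi by rewrite /Pi mulmxA -(mulmxA _ U) hU mulmx1.
clearbody Pi.
have yPi : y *m Pi *m ctrmx (y *m Pi) = y *m Pi *m ctrmx y.
  by rewrite ctrmxM Pi_herm mulmxA -(mulmxA y) Pi_idem.
(* Pythagoras: ||y||^2 = ||y Pi||^2 + ||y - y Pi||^2. *)
rewrite yPi; have := sqr_norm_ge0 (y - y *m Pi).
rewrite ctrmxB ctrmxM Pi_herm mulmxBl !mulmxBr !mulmxA -(mulmxA y Pi Pi) Pi_idem subrr subr0.
by rewrite mxE [X in _ + X]mxE subr_ge0.
Qed.

Lemma eig_proj_le k n (U : 'M[C]_(k, n)) (X : 'M[C]_n) i : U *m ctrmx U = 1%:M -> (i < n)%N ->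
  eig (X *m (ctrmx U *m U) *m ctrmx X) i <= eig (X *m ctrmx X) i.
Proof.
move=> hU ni; have := proj_contraction hU; set Pi := ctrmx U *m U => Pi_contr.
have Pi_herm : ctrmx Pi = Pi by rewrite /Pi ctrmxM ctrmxK.
have Pi_idem : Pi *m Pi = Pi by rewrite /Pi mulmxA -(mulmxA _ U) hU mulmx1.
clearbody Pi.
rewrite -{1}Pi_idem mulmxA -(mulmxA (X *m Pi)) eig_mulC [eig (X *m ctrmx X)]eig_mulC.
rewrite (_ : Pi *m ctrmx X *m (X *m Pi) = Pi *m (ctrmx X *m X) *m ctrmx Pi); last first.
  by rewrite Pi_herm !mulmxA.
by apply: eig_contraction_le => //; rewrite -{2}(ctrmxK X); exact: psd_gram.
Qed.

Lemma det_orthonormal_sqr_le k n (W U : 'M[C]_(k, n)) (X : 'M[C]_n) :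
  W *m ctrmx W = 1%:M -> U *m ctrmx U = 1%:M -> (k <= n)%N ->
  \det (W *m X *m ctrmx U) * (\det (W *m X *m ctrmx U))^*
    <= \prod_(i < k) eig (X *m ctrmx X) i.
Proof.
move=> hW hU kn; rewrite -det_ctrmx -det_mulmx.
have XUX_psd : psd (X *m (ctrmx U *m U) *m ctrmx X).
  by have := psd_gram (X *m ctrmx U); rewrite ctrmxM ctrmxK !mulmxA.
rewrite (_ : W *m X *m ctrmx U *m ctrmx (W *m X *m ctrmx U)
    = W *m (X *m (ctrmx U *m U) *m ctrmx X) *m ctrmx W); last first.
  by rewrite !ctrmxM ctrmxK !mulmxA.
apply: le_trans (det_contraction_le XUX_psd (unitary_contraction hW) kn) _.
have kn_ord (i : 'I_k) : (i < n)%N by exact: leq_trans (ltn_ord i) kn.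
by apply: ler_prod => i _; rewrite eig_psd_ge0 ?eig_proj_le.
Qed.

(* With U an orthonormal basis of the rows of W Y^*, the compression W X Y W^* factors as
   (W X U^* ) (U Y W^* ), and each factor is bounded by the lemma above. *)
Lemma det_compression_sqr_le k n (W : 'M[C]_(k, n)) (X Y : 'M[C]_n) :
  W *m ctrmx W = 1%:M -> (k <= n)%N ->
  \det (W *m X *m Y *m ctrmx W) * (\det (W *m X *m Y *m ctrmx W))^*
    <= (\prod_(i < k) eig (X *m ctrmx X) i) * \prod_(i < k) eig (ctrmx Y *m Y) i.
Proof.
move=> hW kn; set U := schmidt (W *m ctrmx Y).
have hU : U *m ctrmx U = 1%:M by rewrite ctrmxE; apply/unitarymxP; exact: schmidt_unitarymx.
have WYU : W *m ctrmx Y *m ctrmx U *m U = W *m ctrmx Y.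
  have UWY := mulmxKpV (schmidt_sub (W *m ctrmx Y)); rewrite -/U in UWY.
  by rewrite -{1}UWY -(mulmxA _ U) hU mulmx1 UWY.
have UYW : ctrmx U *m U *m Y *m ctrmx W = Y *m ctrmx W.
  by have := congr1 ctrmx WYU; rewrite !ctrmxM !ctrmxK !mulmxA.
rewrite (_ : W *m X *m Y *m ctrmx W
    = (W *m X *m ctrmx U) *m ctrmx (W *m ctrmx Y *m ctrmx U)); last first.
  by rewrite -(mulmxA (W *m X) Y) -UYW !ctrmxM !ctrmxK !mulmxA.
rewrite det_mulmx det_ctrmx rmorphM /= conjCK mulrACA [_^* * _]mulrC.
apply: ler_pM; rewrite ?mul_conjC_ge0 ?det_orthonormal_sqr_le //.
by have := det_orthonormal_sqr_le (ctrmx Y) hW hU kn; rewrite ctrmxK.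
Qed.

Lemma det_eq_compression k n (H : 'M[C]_(k, n)) (M : 'M[C]_n) (D : 'M[C]_k) :
  row_free H -> H *m M = D *m H ->
  exists W : 'M[C]_(k, n),
    [/\ W *m ctrmx W = 1%:M, (k <= n)%N & \det D = \det (W *m M *m ctrmx W)].
Proof.
move=> H_free HM; have kn : (k <= n)%N by rewrite -(eqP H_free) rank_leq_col.
set W := schmidt H.
have hW : W *m ctrmx W = 1%:M by rewrite ctrmxE; apply/unitarymxP; exact: schmidt_unitarymx.
have eH : H = (H *m ctrmx W) *m W.
  have HW := mulmxKpV (schmidt_sub H); rewrite -/W in HW.
  by rewrite -{2}HW -{1}HW -(mulmxA _ W) hW mulmx1.
set T := H *m ctrmx W in eH; clearbody T.
have T_unit : T \in unitmx.
  by rewrite -row_free_unit -row_leq_rank -{1}(eqP H_free) {1}eH mxrankM_maxl.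
exists W; split => //.
have -> : W *m M *m ctrmx W = invmx T *m D *m T.
  have := congr1 (fun N => invmx T *m N *m ctrmx W) HM; rewrite /= eH.
  by rewrite !mulmxA mulVmx // mul1mx => ->; rewrite -!mulmxA hW mulmx1.
by rewrite !det_mulmx det_inv mulrAC mulVr ?mul1r // -unitmxE.
Qed.

Lemma det_intertwine_sqr_le k n (H : 'M[C]_(k, n)) (X Y : 'M[C]_n) (D : 'M[C]_k) :
  row_free H -> H *m (X *m Y) = D *m H ->
  \det D * (\det D)^*
    <= (\prod_(i < k) eig (X *m ctrmx X) i) * \prod_(i < k) eig (ctrmx Y *m Y) i.
Proof.
move=> H_free HXY; have [W [hW kn ->]] := det_eq_compression H_free HXY.
by rewrite mulmxA; exact: det_compression_sqr_le.
Qed.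

Lemma top_eigenrows n k (G : 'M[C]_n) : psd G -> (k <= n)%N ->
  exists (W : 'M[C]_(k, n)) (D : 'M[C]_k),
    [/\ W *m ctrmx W = 1%:M, W *m G = D *m W & \det D = \prod_(i < k) eig G i].
Proof.
move=> hG kn; have [P [g [hP eG _ _ eigG]]] := psd_spectral hG.
pose w := widen_ord kn; have w_inj : injective w by move=> x y /(congr1 val) /= /val_inj.
exists (\matrix_(i, j) P (w i) j), (diag_mx (\row_i g 0 (w i))); split.
- apply/matrixP => i j; have := congr1 (fun M : 'M[C]_n => M (w i) (w j)) hP.
  rewrite /= !mul_ctrmx_entry !mxE (inj_eq w_inj) => <-.
  by apply: eq_bigr => x _; rewrite !mxE.
- have PG : P *m G = diag_mx g *m P by rewrite {1}eG !mulmxA hP mul1mx.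
  apply/matrixP => i j; have := congr1 (fun M : 'M[C]_n => M (w i) j) PG.
  rewrite /= !mul_diag_mx !mxE => <-.
  by apply: eq_bigr => x _; rewrite !mxE.
- by rewrite det_diag; apply: eq_bigr => i _; rewrite mxE -(eigG (w i)).
Qed.

Lemma eig_mul_psd_ge0 n (A B : 'M[C]_n) i : psd A -> psd B -> (i < n)%N -> 0 <= eig (A *m B) i.
Proof.
move=> hA hB ni; have [hs ss] := psd_sqrtP hA; set s := psd_sqrt A in hs ss.
rewrite -ss -mulmxA eig_mulC -{2}(psd_herm hs).
exact: eig_psd_ge0 (psd_congr _ hB) ni.
Qed.

Lemma eig_gram_mul n (a c : 'M[C]_n) : ctrmx a = a -> ctrmx c = c ->
  eig (a *m c *m ctrmx (a *m c)) = eig (a *m a *m (c *m c)).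
Proof.
move=> ha hc; rewrite ctrmxM ha hc.
rewrite (_ : a *m c *m (c *m a) = a *m (c *m c *m a)); last by rewrite !mulmxA.
by rewrite (eig_mulC a) -(mulmxA (c *m c)) eig_mulC.
Qed.

Lemma eig_commuting_psd_prod_le n k (a b c d : 'M[C]_n) :
  psd a -> psd b -> psd c -> psd d -> a *m b = b *m a -> c *m d = d *m c -> (k <= n)%N ->
  0 <= \prod_(i < k) eig (a *m b *m c *m d) i /\
  (\prod_(i < k) eig (a *m b *m c *m d) i) ^+ 2
    <= (\prod_(i < k) eig (a *m a *m (c *m c)) i) * \prod_(i < k) eig (b *m b *m (d *m d)) i.
Proof.
move=> ha hb hc hd ab cd kn.
have [hq qq] := psd_sqrtP (psd_mulmx_comm hc hd cd); set q := psd_sqrt _ in hq qq.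
have hG : psd (q *m (a *m b) *m q).
  by rewrite -{2}(psd_herm hq); exact: psd_congr (psd_mulmx_comm ha hb ab).
rewrite (_ : eig (a *m b *m c *m d) = eig (q *m (a *m b) *m q)); last first.
  by rewrite -mulmxA -qq mulmxA eig_mulC !mulmxA.
have [W [D [hW WG detD]]] := top_eigenrows hG kn.
have D_ge0 : 0 <= \det D.
  by rewrite detD; apply: prodr_ge0 => i _; exact: eig_psd_ge0 hG (leq_trans (ltn_ord i) kn).
rewrite -detD; split => //; rewrite expr2 -{2}(geC0_conj D_ge0).
have [D0|D_neq0] := eqVneq (\det D) 0.
  rewrite D0 mul0r; apply: mulr_ge0; apply: prodr_ge0 => i _;
    by apply: (eig_mul_psd_ge0 _ _ (leq_trans (ltn_ord i) kn)); apply: psd_mulmx_comm.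
have D_unit : D \in unitmx by rewrite unitmxE unitfE.
have W_free : row_free W by apply/row_freeP; exists (ctrmx W).
have [H_free HXY] := intertwine_commuting D_unit W_free ab qq WG.
apply: le_trans (det_intertwine_sqr_le H_free HXY) _.
rewrite (eig_gram_mul (psd_herm ha) (psd_herm hc)).
rewrite (_ : ctrmx (d *m b) *m (d *m b) = b *m d *m ctrmx (b *m d)); last first.
  by rewrite !ctrmxM (psd_herm hb) (psd_herm hd) !mulmxA.
by rewrite (eig_gram_mul (psd_herm hb) (psd_herm hd)) lexx.
Qed.

End PsdMatrices.

Lemma ler_prod_sqrtC (C : numClosedFieldType) k (L : C) (e f : 'I_k -> C) :
  0 <= L -> (forall i, 0 <= e i) -> (forall i, 0 <= f i) ->
  L ^+ 2 <= (\prod_i e i) * \prod_i f i -> L <= \prod_i (sqrtC (e i) * sqrtC (f i)).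
Proof.
move=> L_ge0 e_ge0 f_ge0 hL.
have prod_ge0 : 0 <= \prod_i (sqrtC (e i) * sqrtC (f i)).
  by apply: prodr_ge0 => i _; rewrite mulr_ge0 ?sqrtC_ge0.
rewrite -(ler_sqr L_ge0 prod_ge0) -prodrXl (eq_bigr (fun i => e i * f i)).
  by rewrite big_split.
by move=> i _; rewrite exprMn !sqrtCK.
Qed.

Theorem proposition2 (R : realType) (n : nat) (R1 R2 S1 S2 : 'M[R[i]]_n) :
  psd R1 -> psd R2 -> psd S1 -> psd S2 ->
  R1 *m R2 = R2 *m R1 -> S1 *m S2 = S2 *m S1 ->
  forall k : nat, (1 <= k <= n)%N ->
    \prod_(i < k)
       eig (psd_sqrt R1 *m psd_sqrt R2 *m psd_sqrt S1 *m psd_sqrt S2) i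
    <= \prod_(i < k) (sqrtC (eig (R1 *m S1) i) * sqrtC (eig (S2 *m R2) i)).
Proof.
move=> hR1 hR2 hS1 hS2 eR eS k /andP [_ kn].
have [[ha aa] [hb bb]] := (psd_sqrtP hR1, psd_sqrtP hR2).
have [[hc cc] [hd dd]] := (psd_sqrtP hS1, psd_sqrtP hS2).
have [prod_ge0 prod_le] := eig_commuting_psd_prod_le ha hb hc hd
  (psd_sqrt_comm hR1 hR2 eR) (psd_sqrt_comm hS1 hS2 eS) kn.
rewrite aa bb cc dd (eig_mulC R2) in prod_le.
have ki (i : 'I_k) : (i < n)%N := leq_trans (ltn_ord i) kn.
by apply: (ler_prod_sqrtC prod_ge0 _ _ prod_le) => i; exact: eig_mul_psd_ge0 (ki i).
Qed.
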